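(* In the setting below, for each $v\in\mathbb{R}^d$ and $n\in\mathbb{N}_0$, $$\min_{j=1,\dots,N}\langle x_j(t_{2n+2}),v\rangle\le\langle x_i(t),v\rangle\le\max_{j=1,\dots,N}\langle x_j(t_{2n+2}),v\rangle$$ for all $t\in[t_{2n+1},t_{2n+2}]$ and $i=1,\dots,N$.
   Context: Setting: $N\ge2$; $\psi:\mathbb{R}^d\times\mathbb{R}^d\to\mathbb{R}$ positive, bounded, continuous, $K:=\|\psi\|_\infty$; $\{t_n\}_{n\in\mathbb{N}_0}$ increasing, nonnegative, $t_0=0$, $t_n\to\infty$; $\alpha(0)=1$, $\alpha=1$ on $(t_{2n},t_{2n+1})$, $\alpha=-1$ on $[t_{2n+1},t_{2n+2}]$; $\{x_i\}$ solves $x_i'(t)=\frac1{N-1}\sum_{j\ne i}\alpha(t)\psi(x_i(t),x_j(t))(x_j(t)-x_i(t))$, $t>0$, $x_i(0)=x_i^0\in\mathbb{R}^d$ (continuous, $C^1$ on each $(t_n,t_{n+1})$). Standing assumptions: $t_{2n+2}-t_{2n+1}<\frac{\ln 2}{K}$ for all $n$; $\sum_{p\ge0}\ln\frac{e^{K(t_{2p+2}-t_{2p+1})}}{2-e^{K(t_{2p+2}-t_{2p+1})}}<\infty$; $\sum_{p\ge0}\ln\max\{1-e^{-K(t_{2p+1}-t_{2p})},1-\frac{\psi_0}{K}(1-e^{-K(t_{2p+1}-t_{2p})})\}=-\infty$, with $\psi_0=\min_{|y|,|z|\le M^0}\psi(y,z)$, $M^0=e^{K\sum_{p}(t_{2p+2}-t_{2p+1})}\max_i|x_i^0|$.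 *)

From Stdlib Require Import Reals Lra.
From Coquelicot Require Import Coquelicot.
Open Scope R_scope.

(* A point of R^d is represented by  nat -> R ; only coordinates k < d matter. *)
Definition vec := nat -> R.

Fixpoint sum_first (n : nat) (f : nat -> R) : R :=
  match n with O => 0 | S m => sum_first m f + f m end.
Definition inner (d : nat) (x y : vec) : R := sum_first d (fun k => x k * y k).
Definition vnorm (d : nat) (x : vec) : R := sqrt (inner d x x).

Fixpoint max_upto (f : nat -> R) (n : nat) : R :=
  match n with O => f O | S m => Rmax (max_upto f m) (f (S m)) end.
Fixpoint min_upto (f : nat -> R) (n : nat) : R :=
  match n with O => f O | S m => Rmin (min_upto f m) (f (S m)) end.

Definition psi_continuous (d : nat) (psi : vec -> vec -> R) : Prop :=
  forall (y z : vec) (eps : R), 0 < eps -> exists delta, 0 < delta /\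
    forall y' z' : vec, (forall k, (k < d)%nat -> Rabs (y' k - y k) < delta /\ Rabs (z' k - z k) < delta) ->
      Rabs (psi y' z' - psi y z) < eps.

(* K = ||psi||_oo (psi positive, so sup |psi| = sup psi) *)
Definition is_sup_norm (psi : vec -> vec -> R) (K : R) : Prop :=
  (forall y z, Rabs (psi y z) <= K) /\
  (forall eps, 0 < eps -> exists y z, K - eps < Rabs (psi y z)).

Definition is_alpha (t : nat -> R) (alpha : R -> R) : Prop :=
  alpha 0 = 1 /\
  (forall n s, t (2 * n)%nat < s < t (2 * n + 1)%nat -> alpha s = 1) /\
  (forall n s, t (2 * n + 1)%nat <= s <= t (2 * n + 2)%nat -> alpha s = -1).

Definition rhs (N : nat) (alpha : R -> R) (psi : vec -> vec -> R)
  (x : nat -> R -> vec) (i : nat) (s : R) (k : nat) : R :=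
  / INR (N - 1) *
  sum_first N (fun j => if (j =? i)%nat then 0
                  else alpha s * psi (x i s) (x j s) * (x j s k - x i s k)).

Definition is_solution (N d : nat) (t : nat -> R) (alpha : R -> R)
  (psi : vec -> vec -> R) (x0 : nat -> vec) (x : nat -> R -> vec) : Prop :=
  forall i, (i < N)%nat ->
    (forall k, (k < d)%nat -> x i 0 k = x0 i k) /\
    (forall k, (k < d)%nat ->
       filterlim (fun s => x i s k) (at_right 0) (locally (x i 0 k)) /\
       (forall s, 0 < s -> continuous (fun u => x i u k) s) /\
       (forall n s, t n < s < t (S n) ->
          is_derive (fun u => x i u k) s (rhs N alpha psi x i s k))).

Definition M0 (N d : nat) (t : nat -> R) (K : R) (x0 : nat -> vec) : R :=
  exp (K * Series (fun p => t (2 * p + 2)%nat - t (2 * p + 1)%nat)) *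
  max_upto (fun i => vnorm d (x0 i)) (N - 1).

Definition is_min_on_ball (d : nat) (psi : vec -> vec -> R) (M : R) (psi0 : R) : Prop :=
  (exists y z, vnorm d y <= M /\ vnorm d z <= M /\ psi y z = psi0) /\
  (forall y z, vnorm d y <= M -> vnorm d z <= M -> psi0 <= psi y z).

(* On [t_{2n+1}, t_{2n+2}] we have alpha = -1, so each agent is pushed away
   from the others: the agent with the largest projection <x_i, v> has
   nonnegative velocity in direction v. Hence the running maximum of the
   projections, a continuous function whose lower right Dini derivative is
   nonnegative, is nondecreasing on that interval and every projection stays
   below its value at t_{2n+2}; the lower bound is the upper bound for -v. *)

From Stdlib Require Import Reals Lra Lia.
From Coquelicot Require Import Coquelicot.
Open Scope R_scope.

Lemma le_of_continuous_near (f : R -> R) (c C : R) :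
  continuous f c ->
  (forall del, 0 < del -> exists z, Rabs (z - c) < del /\ f z <= C) ->
  f c <= C.
Proof.
  intros Hf Hnear. apply Rnot_lt_le; intro Hlt.
  assert (Heps : 0 < f c - C) by lra.
  destruct (Hf _ (locally_ball (f c) (mkposreal _ Heps))) as [del Hdel].
  destruct (Hnear del (cond_pos del)) as [z [Hz Hfz]].
  assert (Hball : Rabs (f z - f c) < f c - C) by exact (Hdel z Hz).
  apply Rabs_def2 in Hball. lra.
Qed.

Lemma exists_small_step (del gap : R) :
  0 < del -> 0 < gap -> exists h, 0 < h < del /\ h < gap.
Proof.
  intros Hdel Hgap. exists (Rmin del gap / 2).
  assert (0 < Rmin del gap) by (apply Rmin_pos; assumption).
  assert (Rmin del gap <= del) by apply Rmin_l.
  assert (Rmin del gap <= gap) by apply Rmin_r.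
  lra.
Qed.

Lemma continuous_add_linear (f : R -> R) (k c : R) :
  continuous f c -> continuous (fun z => f z + k * z) c.
Proof.
  intros Hf. apply (continuous_plus f (fun z => k * z)); [exact Hf|].
  apply (continuous_mult (fun _ => k) (fun z => z));
    [apply continuous_const | apply continuous_id].
Qed.

Lemma le_of_locally_right_increasing (g : R -> R) (u w : R) :
  u <= w ->
  (forall z, u <= z <= w -> continuous g z) ->
  (forall c, u <= c < w ->
     exists del, 0 < del /\ forall h, 0 < h < del -> g c < g (c + h)) ->
  g u <= g w.
Proof.
  intros Huw Hcont Hincr.
  (* The supremum c of the points up to which g stays above g u is reached
     by continuity and cannot lie below w by local right increase. *)
  set (S z := u <= z <= w /\ forall z', u <= z' <= z -> g u <= g z').
  destruct (completeness S) as [c [Hub Hlub]].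
  { exists w. intros z [Hz _]. lra. }
  { exists u. split; [lra|]. intros z' Hz'. replace z' with u by lra. lra. }
  assert (Huc : u <= c).
  { apply Hub. split; [lra|]. intros z' Hz'. replace z' with u by lra. lra. }
  assert (Hcw : c <= w) by (apply Hlub; intros z [Hz _]; lra).
  assert (Hbelow : forall z', u <= z' < c -> g u <= g z').
  { intros z' Hz'. apply Rnot_lt_le; intro Hlt.
    enough (c <= z') by lra.
    apply Hlub. intros z [Hz HSz]. apply Rnot_lt_le; intro Hzz.
    assert (g u <= g z') by (apply HSz; lra). lra. }
  assert (Hat : g u <= g c).
  { destruct (Req_dec c u) as [->|Hcu]; [lra|].
    assert (Hc : - g c <= - g u).
    { apply (le_of_continuous_near (fun z => - g z)).
      - apply (continuous_opp g). apply Hcont. lra.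
      - intros del Hdel.
        destruct (exists_small_step del (c - u) Hdel ltac:(lra)) as [h Hh].
        exists (c - h). split; [rewrite Rabs_left; lra|].
        assert (g u <= g (c - h)) by (apply Hbelow; lra). lra. }
    lra. }
  destruct (Rle_lt_or_eq_dec _ _ Hcw) as [Hlt | <-]; [|exact Hat].
  destruct (Hincr c ltac:(lra)) as [del [Hdel Hgc]].
  destruct (exists_small_step del (w - c) Hdel ltac:(lra)) as [h Hh].
  enough (S (c + h)) by (assert (c + h <= c) by (apply Hub; assumption); lra).
  split; [lra|]. intros z' Hz'.
  destruct (Rlt_le_dec z' c) as [Hz'c | Hcz']; [apply Hbelow; lra|].
  destruct (Req_dec z' c) as [-> | Hne]; [exact Hat|].
  replace z' with (c + (z' - c)) by ring.
  assert (g c < g (c + (z' - c))) by (apply Hgc; lra). lra.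
Qed.

Definition right_dini_nonneg (f : R -> R) (c : R) : Prop :=
  forall eps, 0 < eps ->
    exists del, 0 < del /\ forall h, 0 < h < del -> f c - eps * h <= f (c + h).

Lemma le_of_right_dini_nonneg (f : R -> R) (u w : R) :
  u <= w ->
  (forall z, u <= z <= w -> continuous f z) ->
  (forall c, u <= c < w -> right_dini_nonneg f c) ->
  f u <= f w.
Proof.
  intros Huw Hcont Hdini. apply Rle_plus_epsilon. intros eps Heps.
  (* Tilting f by k z turns the non-strict Dini bound into strict increase. *)
  set (k := eps / (w - u + 1)).
  assert (Hk : 0 < k) by (apply Rdiv_lt_0_compat; lra).
  assert (Hkw : k * (w - u) <= eps).
  { unfold k. apply (Rmult_le_reg_r (w - u + 1)); [lra|].
    field_simplify; [nra | lra]. }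
  assert (Hg : f u + k * u <= f w + k * w).
  { apply (le_of_locally_right_increasing (fun z => f z + k * z)); [exact Huw| |].
    - intros z Hz. apply continuous_add_linear, Hcont, Hz.
    - intros c Hc. destruct (Hdini c Hc (k / 2) ltac:(lra)) as [del [Hdel Hd]].
      exists del. split; [exact Hdel|]. intros h Hh.
      assert (Hfh := Hd h Hh). nra. }
  nra.
Qed.

Lemma le_right_end_of_right_dini_nonneg (f : R -> R) (a b : R) :
  (forall z, a <= z <= b -> continuous f z) ->
  (forall c, a < c < b -> right_dini_nonneg f c) ->
  forall u, a <= u <= b -> f u <= f b.
Proof.
  intros Hcont Hdini.
  assert (Hinterior : forall u, a < u <= b -> f u <= f b).
  { intros u Hu. apply le_of_right_dini_nonneg; [lra| |].
    - intros z Hz. apply Hcont. lra.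
    - intros c Hc. apply Hdini. lra. }
  intros u Hu. destruct (Rle_lt_or_eq_dec _ _ (proj1 Hu)) as [Hau | <-].
  - apply Hinterior. lra.
  - destruct (Req_dec a b) as [<- | Hab]; [lra|].
    apply le_of_continuous_near; [apply Hcont; lra|].
    intros del Hdel.
    destruct (exists_small_step del (b - a) Hdel ltac:(lra)) as [h Hh].
    exists (a + h). split; [rewrite Rabs_pos_eq; lra|]. apply Hinterior. lra.
Qed.

Lemma right_dini_nonneg_of_derive (f : R -> R) (c l : R) :
  is_derive f c l -> 0 <= l -> right_dini_nonneg f c.
Proof.
  intros Hder Hl eps Heps. apply is_derive_Reals in Hder.
  destruct (Hder eps Heps) as [del Hdel].
  exists del. split; [apply cond_pos|]. intros h [Hh0 Hh1].
  assert (Hq := Hdel h (Rgt_not_eq _ _ Hh0) ltac:(rewrite Rabs_pos_eq; lra)).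
  apply Rabs_def2 in Hq.
  assert (E : f (c + h) - f c = (f (c + h) - f c) / h * h) by (field; lra).
  assert (0 <= (l - eps + eps) * h) by nra.
  nra.
Qed.

Lemma max_upto_ge (f : nat -> R) (n j : nat) : (j <= n)%nat -> f j <= max_upto f n.
Proof.
  induction n as [|n IHn]; intros Hj; simpl.
  - replace j with O by lia. lra.
  - destruct (Nat.eq_dec j (S n)) as [-> | Hne]; [apply Rmax_r|].
    eapply Rle_trans; [apply IHn; lia | apply Rmax_l].
Qed.

Lemma max_upto_attained (f : nat -> R) (n : nat) :
  exists j, (j <= n)%nat /\ max_upto f n = f j.
Proof.
  induction n as [|n [j [Hj Hmax]]]; [exists O; split; [lia | reflexivity]|].
  simpl. rewrite Hmax. destruct (Rle_dec (f j) (f (S n))) as [Hle | Hgt].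
  - exists (S n). split; [lia|]. now apply Rmax_right.
  - exists j. split; [lia|]. apply Rmax_left. lra.
Qed.

Lemma max_upto_ext (f g : nat -> R) (n : nat) :
  (forall j, f j = g j) -> max_upto f n = max_upto g n.
Proof. intros Hfg. induction n; simpl; rewrite ?IHn, ?Hfg; reflexivity. Qed.

Lemma min_upto_opp_max_upto (f : nat -> R) (n : nat) :
  min_upto f n = - max_upto (fun j => - f j) n.
Proof.
  induction n as [|n IHn]; simpl; [ring|]. rewrite IHn.
  unfold Rmin, Rmax. destruct (Rle_dec _ _), (Rle_dec _ _); lra.
Qed.

Lemma continuous_Rmax (f g : R -> R) (c : R) :
  continuous f c -> continuous g c -> continuous (fun u => Rmax (f u) (g u)) c.
Proof.
  intros Hf Hg.
  apply (continuous_ext (fun u => (f u + g u + Rabs (f u - g u)) / 2)).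
  { intros u. unfold Rmax, Rabs. destruct (Rle_dec _ _), (Rcase_abs _); lra. }
  apply (continuous_mult (fun u => f u + g u + Rabs (f u - g u)) (fun _ => / 2));
    [|apply continuous_const].
  apply (continuous_plus (fun u => f u + g u)); [apply (continuous_plus f g); assumption|].
  apply continuous_Rabs_comp, (continuous_minus f g); assumption.
Qed.

Lemma continuous_max_upto (g : nat -> R -> R) (n : nat) (c : R) :
  (forall j, (j <= n)%nat -> continuous (g j) c) ->
  continuous (fun u => max_upto (fun j => g j u) n) c.
Proof.
  induction n as [|n IHn]; intros Hg; simpl; [apply Hg; lia|].
  apply (continuous_Rmax (fun u => max_upto (fun j => g j u) n) (g (S n))).
  - apply IHn. intros j Hj. apply Hg. lia.
  - apply Hg. lia.
Qed.

Lemma right_dini_nonneg_max_upto (g : nat -> R -> R) (n : nat) (c : R) :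
  (forall j, (j <= n)%nat -> (forall k, (k <= n)%nat -> g k c <= g j c) ->
     right_dini_nonneg (g j) c) ->
  right_dini_nonneg (fun u => max_upto (fun j => g j u) n) c.
Proof.
  intros Hleader eps Heps.
  destruct (max_upto_attained (fun j => g j c) n) as [j [Hj Hmax]].
  assert (Hjmax : forall k, (k <= n)%nat -> g k c <= g j c).
  { intros k Hk. rewrite <- Hmax. apply (max_upto_ge (fun j => g j c)), Hk. }
  destruct (Hleader j Hj Hjmax eps Heps) as [del [Hdel Hd]].
  exists del. split; [exact Hdel|]. intros h Hh.
  rewrite Hmax. eapply Rle_trans; [apply Hd, Hh|].
  apply (max_upto_ge (fun j => g j (c + h))), Hj.
Qed.

Lemma le_max_upto_right_end (g : nat -> R -> R) (n : nat) (a b : R) :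
  (forall j u, (j <= n)%nat -> a <= u <= b -> continuous (g j) u) ->
  (forall j c, (j <= n)%nat -> a < c < b -> (forall k, (k <= n)%nat -> g k c <= g j c) ->
     exists l, 0 <= l /\ is_derive (g j) c l) ->
  forall i u, (i <= n)%nat -> a <= u <= b -> g i u <= max_upto (fun j => g j b) n.
Proof.
  intros Hcont Hleader i u Hi Hu.
  eapply Rle_trans; [apply (max_upto_ge (fun j => g j u)), Hi|].
  apply (le_right_end_of_right_dini_nonneg (fun u => max_upto (fun j => g j u) n) a b);
    [| |exact Hu].
  - intros z Hz. apply continuous_max_upto. intros j Hj. apply Hcont; assumption.
  - intros c Hc. apply right_dini_nonneg_max_upto. intros j Hj Hjmax.
    destruct (Hleader j c Hj Hc Hjmax) as [l [Hl Hder]].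
    exact (right_dini_nonneg_of_derive _ _ _ Hder Hl).
Qed.

Lemma sum_first_ext (n : nat) (f g : nat -> R) :
  (forall k, (k < n)%nat -> f k = g k) -> sum_first n f = sum_first n g.
Proof.
  induction n as [|n IHn]; intros Hfg; simpl; [reflexivity|].
  rewrite IHn, Hfg; [reflexivity | lia | intros; apply Hfg; lia].
Qed.

Lemma sum_first_const0 (n : nat) : sum_first n (fun _ => 0) = 0.
Proof. induction n as [|n IHn]; simpl; [|rewrite IHn]; ring. Qed.

Lemma sum_first_plus (n : nat) (f g : nat -> R) :
  sum_first n (fun k => f k + g k) = sum_first n f + sum_first n g.
Proof. induction n as [|n IHn]; simpl; [|rewrite IHn]; ring. Qed.

Lemma sum_first_mulr (n : nat) (f : nat -> R) (a : R) :
  sum_first n f * a = sum_first n (fun k => f k * a).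
Proof. induction n as [|n IHn]; simpl; [|rewrite <- IHn]; ring. Qed.

Lemma sum_first_exchange (n m : nat) (f : nat -> nat -> R) :
  sum_first n (fun k => sum_first m (fun j => f j k)) =
  sum_first m (fun j => sum_first n (fun k => f j k)).
Proof.
  induction n as [|n IHn]; simpl; [symmetry; apply sum_first_const0|].
  rewrite IHn, <- sum_first_plus. reflexivity.
Qed.

Lemma sum_first_nonneg (n : nat) (f : nat -> R) :
  (forall k, (k < n)%nat -> 0 <= f k) -> 0 <= sum_first n f.
Proof.
  induction n as [|n IHn]; intros Hf; simpl; [lra|].
  assert (0 <= sum_first n f) by (apply IHn; intros; apply Hf; lia).
  assert (0 <= f n) by (apply Hf; lia). lra.
Qed.

Lemma continuous_sum_first (n : nat) (g : nat -> R -> R) (c : R) :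
  (forall k, (k < n)%nat -> continuous (g k) c) ->
  continuous (fun u => sum_first n (fun k => g k u)) c.
Proof.
  induction n as [|n IHn]; intros Hg; simpl; [apply continuous_const|].
  apply (continuous_plus (fun u => sum_first n (fun k => g k u)) (g n)).
  - apply IHn. intros; apply Hg; lia.
  - apply Hg; lia.
Qed.

Lemma is_derive_sum_first (n : nat) (g : nat -> R -> R) (dg : nat -> R) (c : R) :
  (forall k, (k < n)%nat -> is_derive (g k) c (dg k)) ->
  is_derive (fun u => sum_first n (fun k => g k u)) c (sum_first n dg).
Proof.
  induction n as [|n IHn]; intros Hg; simpl; [apply (is_derive_const 0 c)|].
  apply (is_derive_plus (fun u => sum_first n (fun k => g k u)) (g n)).
  - apply IHn. intros; apply Hg; lia.
  - apply Hg; lia.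
Qed.

Lemma inner_0l (d : nat) (v : vec) : inner d (fun _ => 0) v = 0.
Proof.
  unfold inner. transitivity (sum_first d (fun _ => 0)); [|apply sum_first_const0].
  apply sum_first_ext. intros; ring.
Qed.

Lemma inner_scall (d : nat) (a : R) (y v : vec) :
  inner d (fun k => a * y k) v = a * inner d y v.
Proof. unfold inner. induction d as [|d IHd]; simpl; [|rewrite IHd]; ring. Qed.

Lemma inner_subl (d : nat) (y z v : vec) :
  inner d (fun k => y k - z k) v = inner d y v - inner d z v.
Proof. unfold inner. induction d as [|d IHd]; simpl; [|rewrite IHd]; ring. Qed.

Lemma inner_oppr (d : nat) (y v : vec) : inner d y (fun k => - v k) = - inner d y v.
Proof. unfold inner. induction d as [|d IHd]; simpl; [|rewrite IHd]; ring. Qed.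

Lemma inner_sum_firstl (d n : nat) (y : nat -> vec) (v : vec) :
  inner d (fun k => sum_first n (fun j => y j k)) v = sum_first n (fun j => inner d (y j) v).
Proof.
  unfold inner. rewrite <- sum_first_exchange.
  apply sum_first_ext. intros k _. apply sum_first_mulr.
Qed.

Lemma continuous_innerl (d : nat) (y : R -> vec) (v : vec) (c : R) :
  (forall k, (k < d)%nat -> continuous (fun u => y u k) c) ->
  continuous (fun u => inner d (y u) v) c.
Proof.
  intros Hy. apply (continuous_sum_first d (fun k u => y u k * v k)).
  intros k Hk. apply (continuous_mult (fun u => y u k) (fun _ => v k));
    [apply Hy, Hk | apply continuous_const].
Qed.

Lemma is_derive_innerl (d : nat) (y : R -> vec) (y' v : vec) (c : R) :
  (forall k, (k < d)%nat -> is_derive (fun u => y u k) c (y' k)) ->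
  is_derive (fun u => inner d (y u) v) c (inner d y' v).
Proof.
  intros Hy. apply (is_derive_sum_first d (fun k u => y u k * v k)).
  intros k Hk. apply (is_derive_scal_l (fun u => y u k) c _ (v k)), Hy, Hk.
Qed.

Lemma inner_rhs (N d : nat) (alpha : R -> R) (psi : vec -> vec -> R)
    (x : nat -> R -> vec) (i : nat) (s : R) (v : vec) :
  inner d (rhs N alpha psi x i s) v =
  / INR (N - 1) * sum_first N (fun j => if (j =? i)%nat then 0
     else alpha s * psi (x i s) (x j s) * (inner d (x j s) v - inner d (x i s) v)).
Proof.
  unfold rhs. rewrite inner_scall, inner_sum_firstl. f_equal.
  apply sum_first_ext. intros j _. destruct (j =? i)%nat.
  - apply inner_0l.
  - rewrite inner_scall, inner_subl. reflexivity.
Qed.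

Lemma inner_rhs_nonneg_at_leader (N d : nat) (alpha : R -> R) (psi : vec -> vec -> R)
    (x : nat -> R -> vec) (i : nat) (s : R) (v : vec) :
  (2 <= N)%nat -> (forall y z, 0 <= psi y z) -> alpha s <= 0 ->
  (forall j, (j < N)%nat -> inner d (x j s) v <= inner d (x i s) v) ->
  0 <= inner d (rhs N alpha psi x i s) v.
Proof.
  intros HN Hpsi Halpha Hleader. rewrite inner_rhs.
  apply Rmult_le_pos; [left; apply Rinv_0_lt_compat, lt_0_INR; lia|].
  apply sum_first_nonneg. intros j Hj. destruct (j =? i)%nat; [lra|].
  assert (Hp := Hpsi (x i s) (x j s)). assert (Hji := Hleader j Hj).
  assert (0 <= - alpha s * psi (x i s) (x j s)) by nra. nra.
Qed.

Lemma strictly_increasing_from0_pos (t : nat -> R) :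
  t O = 0 -> (forall n, t n < t (S n)) -> forall m, 0 < t (S m).
Proof.
  intros Ht0 Hincr m. induction m as [|m IHm]; [specialize (Hincr O); lra|].
  specialize (Hincr (S m)). lra.
Qed.

Lemma inner_le_max_upto_on_anticonsensus
    (N d : nat) (psi : vec -> vec -> R) (t : nat -> R) (alpha : R -> R)
    (x0 : nat -> vec) (x : nat -> R -> vec) :
  (2 <= N)%nat -> (forall y z, 0 <= psi y z) ->
  t O = 0 -> (forall n, t n < t (S n)) ->
  is_alpha t alpha -> is_solution N d t alpha psi x0 x ->
  forall (v : vec) (n : nat) (s : R) (i : nat),
    t (2 * n + 1)%nat <= s <= t (2 * n + 2)%nat -> (i < N)%nat ->
    inner d (x i s) v <= max_upto (fun j => inner d (x j (t (2 * n + 2)%nat)) v) (N - 1).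
Proof.
  intros HN Hpsi Ht0 Hincr [_ [_ Hanti]] Hsol v n s i Hs Hi.
  assert (Hnext : (2 * n + 2)%nat = S (2 * n + 1)) by lia.
  assert (Hstart : 0 < t (2 * n + 1)%nat).
  { replace (2 * n + 1)%nat with (S (2 * n)) by lia.
    apply strictly_increasing_from0_pos; assumption. }
  apply (le_max_upto_right_end (fun j u => inner d (x j u) v) (N - 1)
           (t (2 * n + 1)%nat) (t (2 * n + 2)%nat)); [| |lia|exact Hs].
  - intros j u Hj Hu. apply continuous_innerl. intros k Hk.
    apply (Hsol j ltac:(lia)); [exact Hk | lra].
  - intros j c Hj Hc Hleader.
    exists (inner d (rhs N alpha psi x j c) v). split.
    + apply inner_rhs_nonneg_at_leader; [assumption | assumption | |].
      * rewrite (Hanti n c); lra.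
      * intros k Hk. apply Hleader. lia.
    + apply is_derive_innerl. intros k Hk.
      apply (Hsol j ltac:(lia)) with (n := (2 * n + 1)%nat); [exact Hk|].
      rewrite <- Hnext. lra.
Qed.

Theorem lemma3p4
  (N d : nat) (psi : vec -> vec -> R) (K psi0 : R) (t : nat -> R) (alpha : R -> R)
  (x0 : nat -> vec) (x : nat -> R -> vec)
  (HN : (2 <= N)%nat)
  (Hpos : forall y z, 0 < psi y z)
  (Hcont : psi_continuous d psi)
  (HK : is_sup_norm psi K)
  (Ht0 : t O = 0)
  (Hincr : forall n, t n < t (S n))
  (Hinf : forall M, exists n, M < t n)
  (Halpha : is_alpha t alpha)
  (Hsol : is_solution N d t alpha psi x0 x)
  (Hpsi0 : is_min_on_ball d psi (M0 N d t K x0) psi0)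
  (A1 : forall n, t (2 * n + 2)%nat - t (2 * n + 1)%nat < ln 2 / K)
  (A2 : ex_series (fun p =>
          ln (exp (K * (t (2 * p + 2)%nat - t (2 * p + 1)%nat)) /
              (2 - exp (K * (t (2 * p + 2)%nat - t (2 * p + 1)%nat))))))
  (A3 : is_lim_seq (sum_n (fun p =>
          ln (Rmax (1 - exp (- K * (t (2 * p + 1)%nat - t (2 * p)%nat)))
                   (1 - psi0 / K * (1 - exp (- K * (t (2 * p + 1)%nat - t (2 * p)%nat)))))))
          m_infty) :
  forall (v : vec) (n : nat) (s : R) (i : nat),
    t (2 * n + 1)%nat <= s <= t (2 * n + 2)%nat -> (i < N)%nat ->
    min_upto (fun j => inner d (x j (t (2 * n + 2)%nat)) v) (N - 1) <= inner d (x i s) v /\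
    inner d (x i s) v <= max_upto (fun j => inner d (x j (t (2 * n + 2)%nat)) v) (N - 1).
Proof.
  intros v n s i Hs Hi.
  assert (Hpsi : forall y z, 0 <= psi y z) by (intros y z; left; apply Hpos).
  pose proof (inner_le_max_upto_on_anticonsensus N d psi t alpha x0 x HN Hpsi Ht0 Hincr
                Halpha Hsol) as Hmax.
  split; [|exact (Hmax v n s i Hs Hi)].
  assert (Hopp := Hmax (fun k => - v k) n s i Hs Hi).
  rewrite inner_oppr, (max_upto_ext _ (fun j => - inner d (x j (t (2 * n + 2)%nat)) v))
    in Hopp by (intros; apply inner_oppr).
  rewrite min_upto_opp_max_upto. lra.
Qed.
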